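(* Let $g\in L^2(\mathbb{R}^3)$, $\theta\in\mathbb{R}$ and $(u_0,\alpha_0)\in L^2(\mathbb{R}^3)\oplus L^2(\mathbb{R}^3)$. If $(u_\theta,\alpha_\theta)\in C^0(\mathbb{R},L^2\oplus L^2)$ is a solution of $$u_\theta(x)=u_0(x)\exp\Big\{-i\int_0^\theta (A_g)_\tau(x)d\tau\Big\},\qquad \alpha_\theta(k)=\alpha_0(k)-ig(k)\int_0^\theta F(|u_\tau|^2)(k)d\tau,$$ then it is unique: any $(v_\theta,\beta_\theta)\in C^0(\mathbb{R},L^2\oplus L^2)$ satisfying the same system with the same initial datum equals $(u_\theta,\alpha_\theta)$.
   Context: $(A_g)_\tau(x)=\int_{\mathbb{R}^3}\big(g(k)\bar\alpha_\tau(k)e^{-ik\cdot x}+\bar g(k)\alpha_\tau(k)e^{ik\cdot x}\big)dk$ and $F(|u|^2)(k)=\int_{\mathbb{R}^3}e^{-ik\cdot x}|u(x)|^2dx$. *)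

From HB Require Import structures.
From mathcomp Require Import all_boot all_order all_algebra.
From mathcomp Require Import all_classical all_reals all_analysis.
From mathcomp.real_closed Require Import complex.

Set Implicit Arguments.
Unset Strict Implicit.
Unset Printing Implicit Defensive.

Import Order.TTheory GRing.Theory Num.Theory.
Import numFieldNormedType.Exports.

Local Open Scope classical_set_scope.
Local Open Scope ring_scope.
Local Open Scope complex_scope.

Section Defs.
Variable R : realType.

Definition R3 := ((R * R) * R)%type.

Definition leb3 := (((@lebesgue_measure R) \x (@lebesgue_measure R))
                      \x (@lebesgue_measure R))%E.

Definition dot3 (k x : R3) : R :=
  k.1.1 * x.1.1 + k.1.2 * x.1.2 + k.2 * x.2.

Definition expi (phi : R) : R[i] := cos phi +i* sin phi.

Definition csq (z : R[i]) : R := complex.Re z ^+ 2 + complex.Im z ^+ 2.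

Definition cint3 (f : R3 -> R[i]) : R[i] :=
  Rintegral leb3 setT (fun x => complex.Re (f x)) +i* Rintegral leb3 setT (fun x => complex.Im (f x)).

Definition oint (theta : R) (h : R -> R) : R :=
  if 0 <= theta then Rintegral (@lebesgue_measure R) `[0, theta] h
  else - Rintegral (@lebesgue_measure R) `[theta, 0] h.

Definition coint (theta : R) (h : R -> R[i]) : R[i] :=
  oint theta (fun t => complex.Re (h t)) +i* oint theta (fun t => complex.Im (h t)).

Definition L2 (f : R3 -> R[i]) : Prop :=
  [/\ measurable_fun setT (fun x => complex.Re (f x)),
      measurable_fun setT (fun x => complex.Im (f x)) &
      (\int[leb3]_x (csq (f x))%:E < +oo)%E].

Definition C0L2 (u : R -> R3 -> R[i]) : Prop :=
  (forall t, L2 (u t)) /\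
  (forall t, (\int[leb3]_x (csq (u s x - u t x))%:E)%E @[s --> t] --> 0%E).

Definition FT_sq (u : R3 -> R[i]) (k : R3) : R[i] :=
  cint3 (fun x => expi (- dot3 k x) * (csq (u x))%:C).

(** The integrand is of the form z + conj z, so the integral is real;
    we take its real part (its imaginary part is the integral of 0). *)
Definition Ag (g : R3 -> R[i]) (alpha : R -> R3 -> R[i]) (tau : R) (x : R3) : R :=
  complex.Re (cint3 (fun k => g k * (alpha tau k)^* * expi (- dot3 k x)
                    + (g k)^* * alpha tau k * expi (dot3 k x))).

(** (u, alpha) solves the system with initial datum (u0, alpha0):
    both equations hold in L^2, i.e. almost everywhere, for every theta. *)
Definition is_solution (g u0 alpha0 : R3 -> R[i])
    (u alpha : R -> R3 -> R[i]) : Prop :=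
  forall theta : R,
    {ae leb3, forall x, u theta x =
        u0 x * expi (- oint theta (fun tau => Ag g alpha tau x))} /\
    {ae leb3, forall k, alpha theta k =
        alpha0 k - 'i * g k * coint theta (fun tau => FT_sq (u tau) k)}.

End Defs.

(* The phase factor exp(-i \int_0^theta A_g) has modulus one, so every solution
   satisfies |u_theta|^2 = |u_0|^2 almost everywhere, whatever alpha is. Hence two
   solutions with the same datum have the same F(|u_tau|^2) for all tau; the
   alpha-equation then gives alpha_theta = beta_theta a.e. for every theta. *)

From HB Require Import structures.
From mathcomp Require Import all_boot all_order all_algebra.
From mathcomp Require Import all_classical all_reals all_analysis.
From mathcomp.real_closed Require Import complex.
From mathcomp Require Import ring.

Local Open Scope classical_set_scope.
Local Open Scope ring_scope.
Local Open Scope complex_scope.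

Import GRing.Theory measurable_realfun.

Section ComplexMeasurable.
Context {d : measure_display} {T : measurableType d} {R : realType}.

Definition cmeasurable (f : T -> R[i]) :=
  measurable_fun setT (fun x => complex.Re (f x)) /\
  measurable_fun setT (fun x => complex.Im (f x)).

Lemma cmeasurableD {f h : T -> R[i]} :
  cmeasurable f -> cmeasurable h -> cmeasurable (fun x => f x + h x).
Proof.
move=> [fr fi] [hr hi]; split.
- apply: eq_measurable_fun (measurable_funD fr hr) => x _ /=.
  by case: (f x) (h x) => ? ? [].
- apply: eq_measurable_fun (measurable_funD fi hi) => x _ /=.
  by case: (f x) (h x) => ? ? [].
Qed.

Lemma cmeasurableM {f h : T -> R[i]} :
  cmeasurable f -> cmeasurable h -> cmeasurable (fun x => f x * h x).
Proof.
move=> [fr fi] [hr hi]; split.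
- apply: eq_measurable_fun (measurable_funB
    (measurable_funM fr hr) (measurable_funM fi hi)) => x _ /=.
  by case: (f x) (h x) => ? ? [].
- apply: eq_measurable_fun (measurable_funD
    (measurable_funM fr hi) (measurable_funM fi hr)) => x _ /=.
  by case: (f x) (h x) => ? ? [].
Qed.

Lemma cmeasurableJ {f : T -> R[i]} :
  cmeasurable f -> cmeasurable (fun x => (f x)^*).
Proof.
move=> [fr fi]; split; first by apply: eq_measurable_fun fr => x _ /=; case: (f x).
by apply: eq_measurable_fun (measurable_funN fi) => x _ /=; case: (f x).
Qed.

Lemma cmeasurable_real {p : T -> R} :
  measurable_fun setT p -> cmeasurable (fun x => (p x)%:C).
Proof. by split. Qed.

Lemma cmeasurable_expi {p : T -> R} :
  measurable_fun setT p -> cmeasurable (fun x => expi (p x)).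
Proof.
move=> mp; split.
- exact: measurableT_comp (continuous_measurable_fun (@continuous_cos R)) mp.
- exact: measurableT_comp (continuous_measurable_fun (@continuous_sin R)) mp.
Qed.

Lemma measurable_csq {f : T -> R[i]} :
  cmeasurable f -> measurable_fun setT (fun x => csq (f x)).
Proof.
by move=> [fr fi]; exact: measurable_funD (measurable_funM fr fr) (measurable_funM fi fi).
Qed.

End ComplexMeasurable.

#[local] Instance leb3_ae_filter (R : realType) :
  Filter (nbhs (almost_everywhere (@leb3 R))).
Proof. exact: ae_filter_ringOfSetsType. Qed.

Section IntegralsOnR3.
Context {R : realType}.

Lemma csq_mul_expi (a : R[i]) (phi : R) : csq (a * expi phi) = csq a.
Proof.
case: a => a b; rewrite /csq /expi /=.
have -> : (a * cos phi - b * sin phi) ^+ 2 + (a * sin phi + b * cos phi) ^+ 2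
        = (a ^+ 2 + b ^+ 2) * (cos phi ^+ 2 + sin phi ^+ 2) by ring.
by rewrite cos2Dsin2 mulr1.
Qed.

Lemma dot3C (k x : R3 R) : dot3 k x = dot3 x k.
Proof. by rewrite /dot3 mulrC [k.1.2 * _]mulrC [k.2 * _]mulrC. Qed.

Lemma measurable_dot3 (k : R3 R) : measurable_fun setT (dot3 k).
Proof.
have m11 : measurable_fun setT (fun x : R3 R => x.1.1).
  exact: measurableT_comp measurable_fst measurable_fst.
have m12 : measurable_fun setT (fun x : R3 R => x.1.2).
  exact: measurableT_comp measurable_snd measurable_fst.
by apply: measurable_funD;
  [apply: measurable_funD|];
  apply: measurable_funM => //; exact: measurable_snd.
Qed.

Lemma L2_cmeasurable {f : R3 R -> R[i]} : L2 f -> cmeasurable f.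
Proof. by case. Qed.

Lemma cint3_ae_eq (f h : R3 R -> R[i]) : cmeasurable f -> cmeasurable h ->
  {ae @leb3 R, forall x, f x = h x} -> cint3 f = cint3 h.
Proof.
move=> [fr fi] [hr hi] fh; rewrite /cint3 /Rintegral.
by congr (fine _ +i* fine _); apply: ae_eq_integral => //;
  do ?exact/measurable_EFinP; apply: filterS fh => x ->.
Qed.

Lemma FT_sq_ae_eq (w1 w2 : R3 R -> R[i]) (k : R3 R) :
  cmeasurable w1 -> cmeasurable w2 ->
  {ae @leb3 R, forall x, csq (w1 x) = csq (w2 x)} -> FT_sq w1 k = FT_sq w2 k.
Proof.
have phase : cmeasurable (fun x => expi (- dot3 k x)).
  apply: cmeasurable_expi; exact: measurable_funN (measurable_dot3 k).
move=> w1m w2m w12; apply: cint3_ae_eq.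
- exact: cmeasurableM phase (cmeasurable_real (measurable_csq w1m)).
- exact: cmeasurableM phase (cmeasurable_real (measurable_csq w2m)).
- by apply: filterS w12 => x ->.
Qed.

Lemma Ag_ae_eq (g : R3 R -> R[i]) {alpha beta : R -> R3 R -> R[i]}
    (tau : R) (x : R3 R) :
  L2 g -> cmeasurable (alpha tau) -> cmeasurable (beta tau) ->
  {ae @leb3 R, forall k, alpha tau k = beta tau k} ->
  Ag g alpha tau x = Ag g beta tau x.
Proof.
have dot_x : measurable_fun setT (fun k => dot3 k x).
  by apply: eq_measurable_fun (measurable_dot3 x) => k _; rewrite dot3C.
have wave := cmeasurable_expi dot_x.
have wave' := cmeasurable_expi (measurable_funN dot_x).
move=> /L2_cmeasurable gm am bm ab; rewrite /Ag; congr complex.Re; apply: cint3_ae_eq.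
- exact: cmeasurableD (cmeasurableM (cmeasurableM gm (cmeasurableJ am)) wave')
                      (cmeasurableM (cmeasurableM (cmeasurableJ gm) am) wave).
- exact: cmeasurableD (cmeasurableM (cmeasurableM gm (cmeasurableJ bm)) wave')
                      (cmeasurableM (cmeasurableM (cmeasurableJ gm) bm) wave).
- by apply: filterS ab => k ->.
Qed.

Lemma solution_csq {g u0 alpha0 : R3 R -> R[i]} {u alpha : R -> R3 R -> R[i]}
    (theta : R) :
  is_solution g u0 alpha0 u alpha ->
  {ae @leb3 R, forall x, csq (u theta x) = csq (u0 x)}.
Proof.
move=> /(_ theta)[u_eq _]; apply: filterS u_eq => x ->; exact: csq_mul_expi.
Qed.

End IntegralsOnR3.

Section Uniqueness.
Context {R : realType} {g u0 alpha0 : R3 R -> R[i]}.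
Context {u alpha v beta : R -> R3 R -> R[i]}.
Hypotheses (u_sol : is_solution g u0 alpha0 u alpha)
           (v_sol : is_solution g u0 alpha0 v beta).

Lemma solution_FT_sq_eq (t : R) (k : R3 R) :
  cmeasurable (u t) -> cmeasurable (v t) -> FT_sq (v t) k = FT_sq (u t) k.
Proof.
move=> um vm; apply: FT_sq_ae_eq vm um _.
by apply: filterS2 (solution_csq t v_sol) (solution_csq t u_sol) => x -> ->.
Qed.

Lemma solution_alpha_ae_eq (theta : R) :
  (forall t k, FT_sq (v t) k = FT_sq (u t) k) ->
  {ae @leb3 R, forall k, beta theta k = alpha theta k}.
Proof.
move=> FT_eq; have [_ beta_eq] := v_sol theta; have [_ alpha_eq] := u_sol theta.
apply: filterS2 beta_eq alpha_eq => k -> ->.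
by congr (_ - _ * coint _ _); apply/funext => t; exact: FT_eq.
Qed.

Lemma solution_u_ae_eq (theta : R) :
  (forall tau x, Ag g beta tau x = Ag g alpha tau x) ->
  {ae @leb3 R, forall x, v theta x = u theta x}.
Proof.
move=> Ag_eq; have [v_eq _] := v_sol theta; have [u_eq _] := u_sol theta.
apply: filterS2 v_eq u_eq => x -> ->.
by congr (_ * expi (- oint _ _)); apply/funext => tau; exact: Ag_eq.
Qed.

End Uniqueness.

Theorem proposition3 (R : realType) (g : R3 R -> R[i]) (theta : R)
    (u0 alpha0 : R3 R -> R[i]) (u alpha v beta : R -> R3 R -> R[i]) :
  L2 g -> L2 u0 -> L2 alpha0 ->
  C0L2 u -> C0L2 alpha -> is_solution g u0 alpha0 u alpha ->
  C0L2 v -> C0L2 beta -> is_solution g u0 alpha0 v beta ->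
  {ae @leb3 R, forall x, v theta x = u theta x} /\
  {ae @leb3 R, forall k, beta theta k = alpha theta k}.
Proof.
move=> g_L2 _ _ [u_L2 _] [alpha_L2 _] u_sol [v_L2 _] [beta_L2 _] v_sol.
have FT_eq t k : FT_sq (v t) k = FT_sq (u t) k.
  exact: solution_FT_sq_eq u_sol v_sol t k
    (L2_cmeasurable (u_L2 t)) (L2_cmeasurable (v_L2 t)).
have alpha_eq th := solution_alpha_ae_eq u_sol v_sol th FT_eq.
split; last exact: alpha_eq.
apply: solution_u_ae_eq u_sol v_sol theta _ => tau x.
apply: Ag_ae_eq g_L2 (L2_cmeasurable (beta_L2 tau)) (L2_cmeasurable (alpha_L2 tau)) _.
exact: alpha_eq.
Qed.
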